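(* Let $\bm{\mu}\in X^{\mathcal{L}(\mathcal{T})}$ satisfy (i) $V_{s_0}(\bm{\mu})\neq\theta$ and (ii) the maximizer $\bm{w}\in\Delta$ of $\inf_{\bm{\lambda}\in\mathrm{Alt}(\bm{\mu})}\sum_\ell w_\ell d(\mu_\ell,\lambda_\ell)$ is unique. Then for every $\epsilon>0$ there exists $\xi>0$ such that for all $\bm{\mu}'\in X^{\mathcal{L}(\mathcal{T})}$ with $\mu'_\ell\in[\mu_\ell-\xi,\mu_\ell+\xi]$ for every $\ell\in\mathcal{L}(\mathcal{T})$, \[\max_{\ell\in\mathcal{L}(\mathcal{T})}|w^{s_0}_\ell(\bm{\mu}')-w^{s_0}_\ell(\bm{\mu})|<\epsilon.\]
   Context: $\mathcal{T}$: finite rooted tree, node set $S$, root $s_0$, children $\mathcal{C}(s)$, leaves $\mathcal{L}(\mathcal{T})$, $\mathcal{D}(s)$ leaves descending from $s$; internal labels $L(s)\in\{\text{MAX},\text{MIN}\}$. $X\subseteq\mathbb{R}$ mean-parameter set of a one-parameter exponential family, $d(x,y)$ KL divergence between members with means $x,y$, threshold $\theta\in X$. $V_s(\bm{\lambda})=\lambda_s$ at leaves, max/min of children's values at MAX/MIN nodes; $a_s=$'win' iff $V_s\ge\theta$. $\Delta$ simplex over leaves; $\mathrm{Alt}(\bm{\mu})=\{\bm{\lambda}\in X^{\mathcal{L}(\mathcal{T})}:a_{s_0}(\bm{\lambda})\neq a_{s_0}(\bm{\mu})\}$. For any mean vector $\bm{\nu}$ (applied to both $\bm{\mu}$ and $\bm{\mu}'$),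 recursive weights: $a^*=a_{s_0}(\bm{\nu})$; $P=$MAX, $Q=$MIN if $a^*=$'win', swapped if 'lose'. Leaf $s$: $w^s_s=1$, $d_s=d(\nu_s,\theta)$ if ($a^*=$'win', $\nu_s\ge\theta$) or ($a^*=$'lose', $\nu_s<\theta$), else $0$. $L(s)=P$: $d_s=\max_c d_c$, $c^*(s)\in\arg\max_c d_c$, if $d_s>0$: $w^s=w^{c^*(s)}$ on $\mathcal{D}(c^*(s))$, $0$ elsewhere. $L(s)=Q$, all $d_c>0$: $d_s=(\sum_c1/d_c)^{-1}$, $w^s_\ell=\frac{w^c_\ell/d_c}{\sum_{c'}1/d_{c'}}$ on $\mathcal{D}(c)$. $L(s)=Q$ otherwise: $d_s=0$. Internal $s$ with $d_s=0$: $\bm{w}^s$ arbitrary probability vector on $\mathcal{D}(s)$. (These recursive values solve $\max_{\bm{w}}\inf_{\bm{\lambda}\in\mathrm{Alt}}\sum_\ell w_\ell d(\nu_\ell,\lambda_\ell)$.) *)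

From HB Require Import structures.
From mathcomp Require Import all_boot all_order all_algebra.
From mathcomp Require Import all_classical all_reals.
From mathcomp Require Import topology normedtype derive.
Set Implicit Arguments. Unset Strict Implicit. Unset Printing Implicit Defensive.
Import Order.TTheory GRing.Theory Num.Theory.
Import numFieldNormedType.Exports.
Local Open Scope classical_set_scope.
Local Open Scope ring_scope.

(* Finite rooted game trees.  An internal node carries its label       *)
(* (true = MAX, false = MIN) and the ordered list of its children.     *)
(* Nodes are addressed by paths (seq nat) from the root s0 = [::];     *)
(* the child number i of node p is  rcons p i.                          *)
Inductive tree := Leaf | Node of bool & seq tree.

Fixpoint subtree (t : tree) (p : seq nat) {struct t} : option tree :=
  match p, t with
  | [::], _ => Some t
  | _ :: _, Leaf => None
  | i :: p', Node _ cs =>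
      (fix walk (cs : seq tree) (i : nat) {struct cs} : option tree :=
         match cs, i with
         | c :: _, 0 => subtree c p'
         | _ :: cs', j.+1 => walk cs' j
         | [::], _ => None
         end) cs i
  end.

Fixpoint wf_tree (t : tree) : bool :=
  match t with
  | Leaf => true
  | Node _ cs => (size cs != 0%N) && all wf_tree cs
  end.

Fixpoint leaves (t : tree) : seq (seq nat) :=
  match t with
  | Leaf => [:: [::]]
  | Node _ cs =>
      (fix go (cs : seq tree) (i : nat) {struct cs} : seq (seq nat) :=
         match cs with
         | [::] => [::]
         | c :: cs' => map (cons i) (leaves c) ++ go cs' i.+1
         end) cs 0%N
  end.

Section Game.
Variable R : realType.

(* V_s(lambda): minimax value of the tree, lambda is indexed by leaf paths *)
Fixpoint gval (t : tree) (lam : seq nat -> R) {struct t} : R :=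
  match t with
  | Leaf => lam [::]
  | Node b cs =>
      odflt 0
      ((fix go (cs : seq tree) (i : nat) {struct cs} : option R :=
         match cs with
         | [::] => None
         | c :: cs' =>
             let v := gval c (fun p => lam (i :: p)) in
             Some (match go cs' i.+1 with
                   | None => v
                   | Some u => if b then Num.max v u else Num.min v u
                   end)
         end) cs 0%N)
  end.

(* a_{s0}(lambda) = 'win'  <->  win t th lam = true *)
Definition win (t : tree) (th : R) (lam : seq nat -> R) : bool := th <= gval t lam.

(* Natural parameter space Th (open interval), log-partition A.        *)
Definition expfam (Th : set R) (A : R -> R) : Prop :=
  [/\ open Th, is_interval Th, Th !=set0,
      (forall e, Th e -> derivable A e 1) &
      (forall e1 e2, Th e1 -> Th e2 -> e1 < e2 -> derive1 A e1 < derive1 A e2)].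

Definition meanset (Th : set R) (A : R -> R) : set R := derive1 A @` Th.

Definition natpar (Th : set R) (A : R -> R) (x : R) : R :=
  xget 0 [set e | Th e /\ derive1 A e = x].

(* KL divergence KL(p_x || p_y) between members with means x, y :
   A(eta_y) - A(eta_x) - (eta_y - eta_x) A'(eta_x), with A'(eta_x) = x *)
Definition kl (Th : set R) (A : R -> R) (x y : R) : R :=
  let ex := natpar Th A x in let ey := natpar Th A y in
  A ey - A ex - (ey - ex) * x.

Definition simplex (t : tree) : set (seq nat -> R) :=
  [set w | (forall l, l \in leaves t -> 0 <= w l) /\
           \sum_(l <- leaves t) w l = 1].

Definition Alt (t : tree) (X : set R) (th : R) (mu : seq nat -> R)
  : set (seq nat -> R) :=
  [set lam | (forall l, l \in leaves t -> X (lam l)) /\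
             win t th lam != win t th mu].

Definition maxmin_obj (t : tree) (X : set R) (d : R -> R -> R) (th : R)
  (mu w : seq nat -> R) : R :=
  inf [set \sum_(l <- leaves t) w l * d (mu l) (lam l)
      | lam in Alt t X th mu].

Definition is_maximizer (t : tree) (X : set R) (d : R -> R -> R) (th : R)
  (mu w : seq nat -> R) : Prop :=
  simplex t w /\
  forall w', simplex t w' -> maxmin_obj t X d th mu w' <= maxmin_obj t X d th mu w.

(* D p = d_p and W p = w^p (extended by 0 outside D(p)) for each node p,
   computed for mean vector nu.  Arbitrary choices (argmax c*(s),
   arbitrary probability vector when d_s = 0) are left free.          *)
Definition probvec_on (t : tree) (p : seq nat) (w : seq nat -> R) : Prop :=
  (forall l, l \in leaves t -> prefix p l -> 0 <= w l) /\
  (forall l, l \in leaves t -> ~~ prefix p l -> w l = 0) /\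
  \sum_(l <- leaves t | prefix p l) w l = 1.

Definition rec_weights (t : tree) (d : R -> R -> R) (th : R)
  (nu : seq nat -> R) (D : seq nat -> R) (W : seq nat -> seq nat -> R) : Prop :=
  let astar := win t th nu in
  forall p,
  match subtree t p with
  | None => True
  | Some Leaf =>
      D p = (if (astar && (th <= nu p)) || (~~ astar && (nu p < th))
             then d (nu p) th else 0) /\
      (forall l, l \in leaves t -> W p l = (l == p)%:R)
  | Some (Node b cs) =>
      let n := size cs in
      (if b == astar then (* L(s) = P *)
         [/\ (exists2 i, (i < n)%N & D (rcons p i) = D p),
             (forall i, (i < n)%N -> D (rcons p i) <= D p) &
             (0 < D p ->
              exists2 i, ((i < n)%N /\ D (rcons p i) = D p) &
                forall l, l \in leaves t ->
                  W p l = if prefix (rcons p i) l then W (rcons p i) l else 0)]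
       else (* L(s) = Q *)
         if [forall i : 'I_n, 0 < D (rcons p i)] then
           let S := \sum_(i < n) (D (rcons p i))^-1 in
           D p = S^-1 /\
           (forall l, l \in leaves t ->
              W p l = \sum_(i < n)
                 (if prefix (rcons p i) l
                  then W (rcons p i) l / D (rcons p i) / S else 0))
         else D p = 0) /\
      (D p = 0 -> probvec_on t p (W p))
  end.

End Game.

From HB Require Import structures.
From mathcomp Require Import all_boot all_order all_algebra.
From mathcomp Require Import all_classical all_reals.
From mathcomp Require Import topology normedtype derive.
From mathcomp Require Import zify ring lra.
Set Implicit Arguments. Unset Strict Implicit. Unset Printing Implicit Defensive.
Import Order.TTheory GRing.Theory Num.Theory.
Import numFieldNormedType.Exports.
Local Open Scope classical_set_scope.
Local Open Scope ring_scope.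

(* At every node s the recursive value d_s is the value of the max-min problem
   restricted to the subtree of s, and w^s attains it: w^s guarantees cost at
   least d_s against every alternative that flips the outcome at s, and for
   every weight vector there are flipping alternatives whose cost exceeds its
   mass times d_s by arbitrarily little.  Hence w^{s0} is a maximizer.  At the
   nodes on which w^{s0} puts weight, any vector optimal for the subtree extends
   to a maximizer at the root, so two argmax children of such a node of type P
   would yield two different maximizers: uniqueness rules out ties there.  The outcome a* is locally
   constant since V_{s0}(mu) <> theta, the values d_s are continuous because
   x |-> d(x, theta) is, near mu the selected child of a P-node does not change
   (no ties), and at a Q-node w^s is a rational function of positive continuous
   quantities. *)

(** * Trees and leaves *)

Lemma tree_nth_ind (P : tree -> Prop) : P Leaf ->
  (forall b cs, (forall i, (i < size cs)%N -> P (nth Leaf cs i)) -> P (Node b cs)) ->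
  forall t, P t.
Proof.
move=> PL PN; fix IH 1; case=> [|b cs]; first exact: PL.
(* [elim] on [cs] would hide the recursive calls from the guard checker. *)
apply: PN; move: cs; fix IHcs 1.
by case=> [|c cs] [|i] lt_i; [done | done | exact: IH c | exact: IHcs cs i lt_i].
Qed.

Lemma subtree_nil t : subtree t [::] = Some t.
Proof. by case: t. Qed.

Lemma subtree_node b cs i q : subtree (Node b cs) (i :: q) =
  if (i < size cs)%N then subtree (nth Leaf cs i) q else None.
Proof. by rewrite /=; elim: cs i => [|c cs IH] [|i] //=; rewrite IH. Qed.

Lemma subtree_cat t p q :
  subtree t (p ++ q) = obind (fun s => subtree s q) (subtree t p).
Proof. by elim: p t => [|i p IH] [|b cs] //; rewrite cat_cons !subtree_node; case: ifP. Qed.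

Lemma subtree_child t p b cs i : subtree t p = Some (Node b cs) -> (i < size cs)%N ->
  subtree t (rcons p i) = Some (nth Leaf cs i).
Proof.
move=> tp lt_i; transitivity (subtree (Node b cs) [:: i]).
  by rewrite -cats1 subtree_cat tp.
by rewrite subtree_node lt_i subtree_nil.
Qed.

Lemma wf_subtree t p s : wf_tree t -> subtree t p = Some s -> wf_tree s.
Proof.
elim: p t => [|i p IH] t; first by rewrite subtree_nil => ? [<-].
case: t => [|b cs] //= /andP[_ /(all_nthP Leaf) wf_cs].
rewrite -/(subtree (Node b cs) (i :: p)) subtree_node.
by case: ifP => // lt_i; apply/IH/wf_cs.
Qed.

Lemma leaves_node b cs : leaves (Node b cs) =
  flatten [seq map (cons i) (leaves (nth Leaf cs i)) | i <- iota 0 (size cs)].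
Proof.
suff go_iota k : (fix go (cs : seq tree) (i : nat) {struct cs} : seq (seq nat) :=
    match cs with
    | [::] => [::]
    | c :: cs' => map (cons i) (leaves c) ++ go cs' i.+1
    end) cs k =
  flatten [seq map (cons (k + i)%N) (leaves (nth Leaf cs i)) | i <- iota 0 (size cs)].
  by rewrite /= go_iota.
elim: cs k => [|c cs IH] k //=.
rewrite IH addn0 -(addn0 1%N) iotaDl -map_comp; congr (_ ++ flatten _).
by apply: eq_map => i /=; rewrite add0n addSnnS.
Qed.

Lemma mem_leaves_node b cs i q : (i < size cs)%N -> q \in leaves (nth Leaf cs i) ->
  i :: q \in leaves (Node b cs).
Proof.
move=> lt_i q_leaf; rewrite leaves_node; apply/flattenP.
exists (map (cons i) (leaves (nth Leaf cs i))); last exact: map_f.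
by apply/mapP; exists i; rewrite ?mem_iota.
Qed.

Lemma flatten_iota_pred1 T (F : nat -> seq T) i m n :
  flatten [seq (if j == i then F j else [::]) | j <- iota m n] =
  if (m <= i < m + n)%N then F i else [::].
Proof.
elim: n m => [|n IH] m /=; first by case: ifP => //; lia.
rewrite IH; case: eqVneq => [->|ne_mi] /=.
  by rewrite ltnn /= cats0 leqnn addnS ltnS leq_addr.
by case: ifP; case: ifP => //; lia.
Qed.

Lemma filter_prefix_leaves t p : [seq l <- leaves t | prefix p l] =
  if subtree t p is Some s then map (cat p) (leaves s) else [::].
Proof.
elim: p t => [|i p IH] t.
  by rewrite subtree_nil map_id; apply/all_filterP/allP => l _; apply: prefix0s.
case: t => [|b cs] //; rewrite leaves_node filter_flatten -map_comp subtree_node.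
rewrite (eq_map (g := fun j => if j == i then
    map (cons j) [seq l <- leaves (nth Leaf cs j) | prefix p l] else [::])); last first.
  move=> j /=; rewrite filter_map; case: eqVneq => [->|ne_ji].
    by congr map; apply: eq_filter => l /=; rewrite eqxx.
  by rewrite (eq_filter (a2 := pred0)) ?filter_pred0 // => l /=; rewrite eq_sym (negbTE ne_ji).
rewrite flatten_iota_pred1 /= add0n; case: ifP => // _.
by rewrite IH; case: (subtree _ p) => // s; rewrite -map_comp.
Qed.

Lemma mem_leaves_subtree t p s q : subtree t p = Some s -> q \in leaves s ->
  p ++ q \in leaves t.
Proof.
move=> tp q_leaf; suff : p ++ q \in [seq l <- leaves t | prefix p l].
  by rewrite mem_filter => /andP[].
by rewrite filter_prefix_leaves tp; apply: map_f.
Qed.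

Lemma mem_leaves_leaf t p : subtree t p = Some Leaf -> p \in leaves t.
Proof. by move=> tp; rewrite -[p]cats0; apply: mem_leaves_subtree tp _; rewrite inE. Qed.

Lemma filter_prefix_node t p b cs : subtree t p = Some (Node b cs) ->
  [seq l <- leaves t | prefix p l] =
  flatten [seq [seq l <- leaves t | prefix (rcons p i) l] | i <- iota 0 (size cs)].
Proof.
move=> tp; rewrite filter_prefix_leaves tp leaves_node map_flatten -map_comp.
congr flatten; apply/eq_in_map => i; rewrite mem_iota add0n => /andP[_ lt_i] /=.
rewrite filter_prefix_leaves (subtree_child tp lt_i) -map_comp.
by apply: eq_map => q /=; rewrite cat_rcons.
Qed.

Lemma prefix_rconsW (p : seq nat) i l : prefix (rcons p i) l -> prefix p l.
Proof. exact/prefix_trans/prefix_rcons. Qed.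

Lemma prefix_rcons_nth (p : seq nat) i l : prefix (rcons p i) l ->
  nth 0%N l (size p) = i /\ (size p < size l)%N.
Proof.
case/prefixP => s ->; rewrite cat_rcons nth_cat ltnn subnn size_cat /=.
by rewrite addnS ltnS leq_addr.
Qed.

Lemma prefix_rcons_inj (p : seq nat) i j l :
  prefix (rcons p i) l -> prefix (rcons p j) l -> i = j.
Proof. by move=> /prefix_rcons_nth[<- _] /prefix_rcons_nth[<- _]. Qed.

Lemma prefix_leaf_child t p b cs l : subtree t p = Some (Node b cs) ->
  l \in leaves t -> prefix p l -> exists2 i, (i < size cs)%N & prefix (rcons p i) l.
Proof.
move=> tp l_leaf pl; have : l \in [seq l <- leaves t | prefix p l] by rewrite mem_filter pl.
rewrite (filter_prefix_node tp) => /flattenP[s /mapP[i]].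
by rewrite mem_iota add0n => /andP[_ lt_i] ->; rewrite mem_filter => /andP[? _]; exists i.
Qed.

Section PrefixSums.
Variable V : nmodType.

Lemma big_prefix_leaf t p (F : seq nat -> V) : subtree t p = Some Leaf ->
  \sum_(l <- leaves t | prefix p l) F l = F p.
Proof. by move=> tp; rewrite -big_filter filter_prefix_leaves tp big_seq1 cats0. Qed.

Lemma big_prefix_node t p b cs (F : seq nat -> V) : subtree t p = Some (Node b cs) ->
  \sum_(l <- leaves t | prefix p l) F l =
  \sum_(i < size cs) \sum_(l <- leaves t | prefix (rcons p i) l) F l.
Proof.
move=> tp; rewrite -big_filter (filter_prefix_node tp) big_flatten big_map /=.
rewrite -{1}(subn0 (size cs)) -/(index_iota _ _) big_mkord.
by apply: eq_bigr => i _; rewrite big_filter.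
Qed.

End PrefixSums.

Lemma subtree_ind t (P : seq nat -> tree -> Prop) :
  (forall p, subtree t p = Some Leaf -> P p Leaf) ->
  (forall p b cs, subtree t p = Some (Node b cs) ->
     (forall i, (i < size cs)%N -> P (rcons p i) (nth Leaf cs i)) -> P p (Node b cs)) ->
  forall s p, subtree t p = Some s -> P p s.
Proof.
move=> PL PN; elim/tree_nth_ind => [|b cs IH] p tp; first exact: PL.
by apply: PN => // i lt_i; apply: IH; rewrite ?(subtree_child tp lt_i).
Qed.

Lemma wf_subtree_size t p b cs : wf_tree t -> subtree t p = Some (Node b cs) ->
  (0 < size cs)%N.
Proof. by move=> wf tp; have /= /andP[cs_n0 _] := wf_subtree wf tp; rewrite lt0n. Qed.

(** * Minimax values *)

Section Minimax.
Variable R : realType.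

Definition is_extremum (b : bool) n (x : nat -> R) (v : R) :=
  (exists2 i, (i < n)%N & v = x i) /\
  (forall i, (i < n)%N -> if b then x i <= v else v <= x i).

Lemma eq_is_extremum b n (x y : nat -> R) v : (forall i, (i < n)%N -> x i = y i) ->
  is_extremum b n x v -> is_extremum b n y v.
Proof.
move=> xy [[i lt_i ->] bound]; split=> [|j lt_j]; first by exists i; rewrite ?xy.
by rewrite -!xy //; apply: bound.
Qed.

Lemma is_extremum_cons b n (x : nat -> R) u : is_extremum b n (fun i => x i.+1) u ->
  is_extremum b n.+1 x (if b then Num.max (x 0%N) u else Num.min (x 0%N) u).
Proof.
case=> -[i lt_i ->] bound; split.
  case: b bound => _; [rewrite /Num.max | rewrite /Num.min].
    by case: ifP => _; [exists i.+1 | exists 0%N].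
  by case: ifP => _; [exists 0%N | exists i.+1].
case=> [|j] lt_j; case: b bound => bound.
- by rewrite le_max lexx.
- by rewrite ge_min lexx.
- by rewrite le_max bound ?orbT.
- by rewrite ge_min bound ?orbT.
Qed.

Lemma extremum_dist_le b n (x y : nat -> R) v w e :
  is_extremum b n x v -> is_extremum b n y w ->
  (forall i, (i < n)%N -> `|x i - y i| <= e) -> `|v - w| <= e.
Proof.
case=> -[i lt_i ->] xb [[j lt_j ->] yb] xy.
have := xy i lt_i; have := xy j lt_j; have := xb j lt_j; have := yb i lt_i.
by rewrite !ler_norml; case: b {xb yb} => ? ? /andP[? ?] /andP[? ?]; apply/andP; split; lra.
Qed.

Lemma extremum_monoP b up n (x : nat -> R) v (P : R -> bool) : is_extremum b n x v ->
  (forall u w, (if up then u <= w else w <= u) -> P u -> P w) ->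
  P v <-> if b == up then exists2 i, (i < n)%N & P (x i) else forall i, (i < n)%N -> P (x i).
Proof.
case=> -[i lt_i ->] bound Pmono; case: b bound; case: up Pmono => /= Pmono bound.
- by split=> [Pi|[j lt_j /Pmono]]; [exists i | apply; apply: bound].
- by split=> [Pi j lt_j|]; [apply: Pmono Pi; apply: bound | apply].
- by split=> [Pi j lt_j|]; [apply: Pmono Pi; apply: bound | apply].
- by split=> [Pi|[j lt_j /Pmono]]; [exists i | apply; apply: bound].
Qed.

(* The anonymous fixpoint in the definition of [gval], named so that
   [gval (Node b cs) lam] is convertible to [odflt 0 (children_val b lam cs 0)]. *)
Section ChildrenValue.
Variables (b : bool) (lam : seq nat -> R).

Fixpoint children_val (cs : seq tree) (k : nat) : option R :=
  if cs is c :: cs' then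
    let v := gval c (fun q => lam (k :: q)) in
    Some (if children_val cs' k.+1 is Some u then
            if b then Num.max v u else Num.min v u
          else v)
  else None.

Lemma children_valP cs k : (0 < size cs)%N -> exists2 v, children_val cs k = Some v &
  is_extremum b (size cs) (fun i => gval (nth Leaf cs i) (fun q => lam ((k + i)%N :: q))) v.
Proof.
elim: cs k => [|c [|c' cs] IH] k // _.
  exists (gval c (fun q => lam (k :: q))) => //.
  by split=> [|[|]//]; [exists 0%N; rewrite ?addn0 | rewrite addn0; case: b].
have [v cs_v ext_v] := IH k.+1 isT; pose v0 := gval c (fun q => lam (k :: q)).
exists (if b then Num.max v0 v else Num.min v0 v).
  by rewrite -[LHS]/(Some (if children_val (c' :: cs) k.+1 is Some u
    then if b then Num.max v0 u else Num.min v0 u else v0)) cs_v.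
have -> : v0 = gval (nth Leaf (c :: c' :: cs) 0) (fun q => lam ((k + 0)%N :: q)).
  by rewrite addn0.
apply: is_extremum_cons; move: ext_v; congr is_extremum.
by apply: funext => i; rewrite addSnnS.
Qed.

End ChildrenValue.

Lemma gval_nodeP b cs (lam : seq nat -> R) : (0 < size cs)%N ->
  is_extremum b (size cs) (fun i => gval (nth Leaf cs i) (fun q => lam (i :: q)))
    (gval (Node b cs) lam).
Proof.
move=> cs_gt0; have [v cs_v ext_v] := children_valP b lam 0 cs_gt0.
by rewrite -[gval _ lam]/(odflt 0 (children_val b lam cs 0)) cs_v.
Qed.

Lemma gval_dist_le s (l1 l2 : seq nat -> R) e : 0 <= e ->
  (forall q, q \in leaves s -> `|l1 q - l2 q| <= e) -> `|gval s l1 - gval s l2| <= e.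
Proof.
move=> e_ge0; elim/tree_nth_ind: s l1 l2 => [|b cs IH] l1 l2 l12.
  by apply: l12; rewrite inE.
have [/size0nil ->|cs_gt0] := posnP (size cs); first by rewrite /= subrr normr0.
apply: extremum_dist_le (gval_nodeP b l1 cs_gt0) (gval_nodeP b l2 cs_gt0) _ => i lt_i.
by apply: IH => // q q_leaf; apply/l12/mem_leaves_node.
Qed.

Lemma eq_gval s (l1 l2 : seq nat -> R) :
  (forall q, q \in leaves s -> l1 q = l2 q) -> gval s l1 = gval s l2.
Proof.
move=> l12; apply/eqP; rewrite -subr_eq0 -normr_le0; apply: gval_dist_le => // q q_leaf.
by rewrite l12 // subrr normr0.
Qed.

Definition nodeval t (p : seq nat) (lam : seq nat -> R) : R :=
  if subtree t p is Some s then gval s (fun q => lam (p ++ q)) else 0.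

Lemma nodeval_root t (lam : seq nat -> R) : nodeval t [::] lam = gval t lam.
Proof. by rewrite /nodeval subtree_nil. Qed.

Lemma nodeval_leaf t p (lam : seq nat -> R) : subtree t p = Some Leaf -> nodeval t p lam = lam p.
Proof. by move=> tp; rewrite /nodeval tp /= cats0. Qed.

Lemma nodeval_node t p b cs (lam : seq nat -> R) :
  wf_tree t -> subtree t p = Some (Node b cs) ->
  is_extremum b (size cs) (fun i => nodeval t (rcons p i) lam) (nodeval t p lam).
Proof.
move=> wf tp; have cs_gt0 := wf_subtree_size wf tp.
rewrite {2}/nodeval tp; apply: eq_is_extremum (gval_nodeP b _ cs_gt0) => i lt_i.
rewrite /nodeval (subtree_child tp lt_i); congr gval; apply: funext => q.
by rewrite cat_rcons.
Qed.

Lemma eq_nodeval t p (l1 l2 : seq nat -> R) :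
  (forall l, l \in leaves t -> prefix p l -> l1 l = l2 l) -> nodeval t p l1 = nodeval t p l2.
Proof.
move=> l12; rewrite /nodeval; case tp: (subtree t p) => [s|] //.
apply: eq_gval => q q_leaf; apply: l12; first exact: mem_leaves_subtree tp q_leaf.
exact: prefix_prefix.
Qed.

Definition flips (a : bool) (th v : R) : bool := if a then v < th else th <= v.
Definition strict_side (a : bool) (th v : R) : bool := if a then th < v else v < th.

Lemma flips_node t p b cs a th (lam : seq nat -> R) :
  wf_tree t -> subtree t p = Some (Node b cs) ->
  flips a th (nodeval t p lam) <->
  if b == a then forall i, (i < size cs)%N -> flips a th (nodeval t (rcons p i) lam)
  else exists2 i, (i < size cs)%N & flips a th (nodeval t (rcons p i) lam).
Proof.
move=> wf tp; have := extremum_monoP (up := ~~ a) (P := flips a th) (nodeval_node lam wf tp).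
by case: a b {tp} => -[] /=; apply=> u w; rewrite /flips /=; lra.
Qed.

Lemma strict_side_node t p b cs a th (lam : seq nat -> R) :
  wf_tree t -> subtree t p = Some (Node b cs) ->
  strict_side a th (nodeval t p lam) <->
  if b == a then exists2 i, (i < size cs)%N & strict_side a th (nodeval t (rcons p i) lam)
  else forall i, (i < size cs)%N -> strict_side a th (nodeval t (rcons p i) lam).
Proof.
move=> wf tp; have := extremum_monoP (up := a) (P := strict_side a th) (nodeval_node lam wf tp).
by case: a b {tp} => -[] /=; apply=> u w; rewrite /strict_side /=; lra.
Qed.

Lemma strict_side_root t th (nu : seq nat -> R) : gval t nu != th ->
  strict_side (win t th nu) th (nodeval t [::] nu).
Proof.
rewrite nodeval_root /strict_side /win => ne_th; case: ifP => [|/negbT]; last by rewrite -ltNge.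
by rewrite le_eqVlt eq_sym (negbTE ne_th).
Qed.

Lemma flips_root t th (nu lam : seq nat -> R) :
  flips (win t th nu) th (nodeval t [::] lam) = (win t th lam != win t th nu).
Proof. by rewrite nodeval_root /flips /win; case: (th <= gval t nu); case: leP. Qed.

End Minimax.

(** * Exponential families *)

Section RealBalls.
Variable R : realType.

Lemma open_ball_subset (S : set R) e : open S -> S e ->
  exists2 r : R, 0 < r & forall e', `|e - e'| < r -> S e'.
Proof.
rewrite openE => /[apply] /nbhs_ballP[r r_gt0 rS].
by exists r => // e' ee'; apply: rS; rewrite -ball_normE.
Qed.

Lemma continuous_ball (f : R -> R) e (eps : R) : {for e, continuous f} -> 0 < eps ->
  exists2 delta : R, 0 < delta & forall e', `|e - e'| < delta -> `|f e - f e'| < eps.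
Proof.
move=> /cvgrPdist_lt f_cont /f_cont /nbhs_ballP[del del_gt0 fdel].
by exists del => // e' ee'; apply: fdel; rewrite -ball_normE.
Qed.

End RealBalls.

Section ExponentialFamily.
Variables (R : realType) (Th : set R) (A : R -> R).
Hypothesis HE : expfam Th A.
Local Notation X := (meanset Th A).
Local Notation g := (natpar Th A).
Local Notation d := (kl Th A).
Local Notation A' := (derive1 A).

Lemma expfam_open : open Th. Proof. by case: HE. Qed.

Lemma expfam_between e1 e2 e : Th e1 -> Th e2 -> e1 <= e <= e2 -> Th e.
Proof. by case: HE => _ Th_itv _ _ _ Th1 Th2; apply: Th_itv. Qed.

Lemma expfam_derive_lt e1 e2 : Th e1 -> Th e2 -> e1 < e2 -> A' e1 < A' e2.
Proof. by case: HE => _ _ _ _; apply. Qed.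

Lemma expfam_derive_le e1 e2 : Th e1 -> Th e2 -> e1 <= e2 -> A' e1 <= A' e2.
Proof.
move=> Th1 Th2; rewrite le_eqVlt => /predU1P[->//|].
by move/(expfam_derive_lt Th1 Th2)/ltW.
Qed.

Lemma expfam_continuous e : Th e -> {for e, continuous A}.
Proof.
case: HE => _ _ _ A_der _ Te; apply: differentiable_continuous.
exact/derivable1_diffP/A_der.
Qed.

Lemma expfam_mvt e1 e2 : Th e1 -> Th e2 -> e1 < e2 ->
  exists2 c, e1 < c < e2 & A e2 - A e1 = A' c * (e2 - e1).
Proof.
move=> Th1 Th2 e12; have Th_itv x : x \in `[e1, e2] -> Th x.
  by rewrite in_itv => /expfam_between; apply.
have A_der x : x \in `]e1, e2[ -> is_derive x 1 A (A' x).
  move=> /subset_itv_oo_cc/Th_itv Tx; rewrite derive1E.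
  by case: HE => _ _ _ A_der _; apply/derivableP/A_der.
have A_cont : {within `[e1, e2], continuous A}.
  by apply: continuous_in_subspaceT => x /[!inE] /Th_itv/expfam_continuous.
have [c c_in AE] := MVT e12 A_der A_cont.
by exists c; rewrite ?AE //; move: c_in; rewrite in_itv.
Qed.

Lemma mem_meanset e : Th e -> X (A' e).
Proof. by exists e. Qed.

Lemma natparP x : X x -> Th (g x) /\ A' (g x) = x.
Proof.
case=> e Te <-; rewrite /natpar.
by apply: (xgetPex 0 (P := [set e0 | Th e0 /\ A' e0 = A' e])); exists e.
Qed.

Lemma natpar_lt x y : X x -> X y -> x < y -> g x < g y.
Proof.
move=> Xx Xy xy; have [Tx Ex] := natparP Xx; have [Ty Ey] := natparP Xy.
rewrite ltNge; apply/negP => /(expfam_derive_le Ty Tx); rewrite Ex Ey; lra.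
Qed.

Lemma natpar_le x y : X x -> X y -> x <= y -> g x <= g y.
Proof. by move=> Xx Xy; rewrite le_eqVlt => /predU1P[->//|/(natpar_lt Xx Xy)/ltW]. Qed.

Lemma natparK e : Th e -> g (A' e) = e.
Proof.
move=> Te; have [Tg Eg] := natparP (mem_meanset Te).
case: (ltgtP (g (A' e)) e) => // [/(expfam_derive_lt Tg Te)|/(expfam_derive_lt Te Tg)];
  by rewrite Eg ltxx.
Qed.

Definition bregman x e := A e - A (g x) - (e - g x) * x.

Lemma kl_bregman x y : d x y = bregman x (g y). Proof. by []. Qed.

Lemma bregman_increasing x e1 e2 : X x -> Th e1 -> Th e2 -> g x <= e1 -> e1 < e2 ->
  bregman x e1 < bregman x e2.
Proof.
move=> Xx Th1 Th2 xe1 e12; have [c /andP[e1c ce2] AE] := expfam_mvt Th1 Th2 e12.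
have [Tx Ex] := natparP Xx.
have Tc : Th c by apply: (expfam_between Th1 Th2); rewrite !ltW.
have : x < A' c by rewrite -{1}Ex; apply: expfam_derive_lt => //; apply: le_lt_trans e1c.
move=> xc; have : 0 < (A' c - x) * (e2 - e1) by apply: mulr_gt0; rewrite subr_gt0.
by rewrite /bregman; move: AE; set a := A' c; nra.
Qed.

Lemma bregman_decreasing x e1 e2 : X x -> Th e1 -> Th e2 -> e2 <= g x -> e1 < e2 ->
  bregman x e2 < bregman x e1.
Proof.
move=> Xx Th1 Th2 e2x e12; have [c /andP[e1c ce2] AE] := expfam_mvt Th1 Th2 e12.
have [Tx Ex] := natparP Xx.
have Tc : Th c by apply: (expfam_between Th1 Th2); rewrite !ltW.
have : A' c < x by rewrite -{1}Ex; apply: expfam_derive_lt => //; apply: lt_le_trans e2x.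
move=> cx; have : 0 < (x - A' c) * (e2 - e1) by apply: mulr_gt0; rewrite subr_gt0.
by rewrite /bregman; move: AE; set a := A' c; nra.
Qed.

Lemma kl_xx x : d x x = 0.
Proof. by rewrite kl_bregman /bregman !subrr mul0r subrr. Qed.

Lemma kl_gt0 x y : X x -> X y -> x != y -> 0 < d x y.
Proof.
move=> Xx Xy; have [Tx Ex] := natparP Xx; have [Ty Ey] := natparP Xy.
rewrite kl_bregman -(kl_xx x) kl_bregman; case: (ltgtP (g x) (g y)) => [xy|yx|xy]; last first.
- by rewrite -Ex -Ey xy eqxx.
- by move=> _; apply: bregman_decreasing.
- by move=> _; apply: bregman_increasing.
Qed.

Lemma kl_ge0 x y : X x -> X y -> 0 <= d x y.
Proof. by move=> Xx Xy; have [->|/(kl_gt0 Xx Xy)/ltW//] := eqVneq x y; rewrite kl_xx. Qed.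

Lemma kl_le_below x y z : X x -> X y -> X z -> z < y -> y <= x -> d x y <= d x z.
Proof.
move=> Xx Xy Xz zy yx; rewrite !kl_bregman; apply/ltW/bregman_decreasing => //.
- by case: (natparP Xz).
- by case: (natparP Xy).
- exact: natpar_le.
- exact: natpar_lt.
Qed.

Lemma kl_le_above x y z : X x -> X y -> X z -> x < y -> y <= z -> d x y <= d x z.
Proof.
move=> Xx Xy Xz xy; rewrite le_eqVlt => /predU1P[->//|yz].
rewrite !kl_bregman; apply/ltW/bregman_increasing => //.
- by case: (natparP Xy).
- by case: (natparP Xz).
- exact/ltW/natpar_lt.
- exact: natpar_lt.
Qed.

Lemma kl_approx_below x y eps : X x -> X y -> 0 < eps ->
  exists z, [/\ X z, z < y & d x z <= d x y + eps].
Proof.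
move=> Xx Xy eps_gt0; have [Ty Ey] := natparP Xy; set ey := g y in Ty Ey *.
have [r r_gt0 rTh] := open_ball_subset expfam_open Ty.
have eps2_gt0 : 0 < eps / 2 by lra.
have [del del_gt0 Adel] := continuous_ball (expfam_continuous Ty) eps2_gt0.
pose m := Num.min (Num.min (r / 2) (del / 2)) (eps / (2 * (`|x| + 1))).
have x_ge0 := normr_ge0 x.
have m_gt0 : 0 < m by rewrite !lt_min !divr_gt0 //; lra.
have mr : m < r by rewrite /m !gt_min (_ : r / 2 < r) //; lra.
have mdel : m < del by rewrite /m !gt_min (_ : del / 2 < del) ?orbT //; lra.
have meps : m * (2 * (`|x| + 1)) <= eps by rewrite -ler_pdivlMr ?ge_min ?lexx ?orbT //; lra.
have ey_m : `|ey - (ey - m)| = m by rewrite opprB addrC subrK gtr0_norm.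
have Tm : Th (ey - m) by apply: rTh; rewrite ey_m.
exists (A' (ey - m)); split; first exact: mem_meanset.
  by rewrite -{1}Ey; apply: expfam_derive_lt => //; lra.
rewrite !kl_bregman natparK // -/ey /bregman.
have /Adel : `|ey - (ey - m)| < del by rewrite ey_m.
rewrite ltr_norml => /andP[A_lo A_hi].
have : m * x <= m * `|x| by apply: ler_wpM2l; [exact: ltW | exact: ler_norm].
nra.
Qed.

Lemma natpar_continuous x0 (eps : R) : X x0 -> 0 < eps ->
  exists2 delta : R, 0 < delta & forall x, X x -> `|x - x0| < delta -> `|g x - g x0| < eps.
Proof.
move=> Xx0 eps_gt0; have [T0 E0] := natparP Xx0; set e0 := g x0 in T0 E0 *.
have [r r_gt0 rTh] := open_ball_subset expfam_open T0.
pose m := Num.min eps r / 2.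
have m_gt0 : 0 < m by rewrite divr_gt0 // lt_min eps_gt0.
have [meps mr] : m < eps /\ m < r.
  have : Num.min eps r <= eps by rewrite ge_min lexx.
  have : Num.min eps r <= r by rewrite ge_min lexx orbT.
  by rewrite /m; split; lra.
have Tm : Th (e0 - m) by apply: rTh; rewrite opprB addrC subrK gtr0_norm.
have Tp : Th (e0 + m) by apply: rTh; rewrite opprD addNKr normrN gtr0_norm.
have lo : A' (e0 - m) < x0 by rewrite -{1}E0; apply: expfam_derive_lt => //; lra.
have hi : x0 < A' (e0 + m) by rewrite -{1}E0; apply: expfam_derive_lt => //; lra.
exists (Num.min (x0 - A' (e0 - m)) (A' (e0 + m) - x0)); first by rewrite lt_min !subr_gt0 lo hi.
move=> x Xx; rewrite lt_min !ltr_norml => /andP[/andP[? ?] /andP[? ?]].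
have := natpar_lt (mem_meanset Tm) Xx ltac:(lra).
have := natpar_lt Xx (mem_meanset Tp) ltac:(lra).
by rewrite !natparK // => ? ?; apply/andP; split; lra.
Qed.

Lemma kl_sub_fst x x0 y :
  d x y - d x0 y = (A (g x0) - A (g x)) + (g y - g x0) * (x0 - x) + (g x - g x0) * x.
Proof. by rewrite /kl; ring. Qed.

Lemma kl_continuous_fst y x0 (eps : R) : X y -> X x0 -> 0 < eps ->
  exists2 delta : R, 0 < delta & forall x, X x -> `|x - x0| < delta -> `|d x y - d x0 y| < eps.
Proof.
move=> Xy Xx0 eps_gt0; have [T0 _] := natparP Xx0.
set u0 := g x0 in T0 *; set K := `|g y - u0|; set M := `|x0| + 1.
have K_ge0 : 0 <= K by exact: normr_ge0.
have M_gt0 : 0 < M by rewrite /M; have := normr_ge0 x0; lra.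
have eps3_gt0 : 0 < eps / 3 by lra.
have [dA dA_gt0 Adel] := continuous_ball (expfam_continuous T0) eps3_gt0.
pose eta := Num.min dA (eps / (3 * M)).
have eta_gt0 : 0 < eta by rewrite lt_min dA_gt0 divr_gt0 //; lra.
have [dg dg_gt0 gdel] := natpar_continuous Xx0 eta_gt0.
exists (Num.min (Num.min dg 1) (eps / (3 * (K + 1)))).
  by rewrite !lt_min dg_gt0 ltr01 divr_gt0 //; lra.
move=> x Xx; rewrite !lt_min => /andP[/andP[x_dg x_1] x_K].
have {gdel} /[dup] ux : `|g x - u0| < eta by exact: gdel.
rewrite lt_min => /andP[u_dA u_M]; rewrite kl_sub_fst -/u0.
have lt_A : `|A u0 - A (g x)| < eps / 3 by apply: Adel; rewrite distrC.
have le_K : `|(g y - u0) * (x0 - x)| <= eps / 3.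
  rewrite normrM -/K distrC.
  have : `|x - x0| * (3 * (K + 1)) < eps by rewrite -ltr_pdivlMr //; lra.
  by have := normr_ge0 (x - x0); nra.
have le_M : `|(g x - u0) * x| <= eps / 3.
  have x_M : `|x| < M by rewrite /M; have := ler_normD (x - x0) x0; rewrite subrK; lra.
  have : `|g x - u0| * (3 * M) < eps by rewrite -ltr_pdivlMr ?mulr_gt0.
  by rewrite normrM; have := normr_ge0 (g x - u0); have := normr_ge0 x; nra.
have := ler_normD (A u0 - A (g x) + (g y - u0) * (x0 - x)) ((g x - u0) * x).
have := ler_normD (A u0 - A (g x)) ((g y - u0) * (x0 - x)).
lra.
Qed.

End ExponentialFamily.

(** * Recursive weights solve the max-min problem *)

Section OrdinalSums.
Variable R : realFieldType.

Lemma sumr_ord_gt0 n (f : 'I_n -> R) : (0 < n)%N -> (forall i, 0 < f i) ->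
  0 < \sum_(i < n) f i.
Proof.
move=> n_gt0 f_gt0; apply: (lt_le_trans (f_gt0 (Ordinal n_gt0))).
by rewrite (bigD1 (Ordinal n_gt0)) //= lerDl; apply: sumr_ge0 => i _; apply/ltW.
Qed.

Lemma ler_sum_ord_term n (f : 'I_n -> R) k : (forall i, 0 <= f i) ->
  f k <= \sum_(i < n) f i.
Proof. by move=> f_ge0; rewrite (bigD1 k) //= lerDl; apply: sumr_ge0. Qed.

Lemma ltr_sum_ord n (f g : 'I_n -> R) : (0 < n)%N -> (forall i, f i < g i) ->
  \sum_(i < n) f i < \sum_(i < n) g i.
Proof.
move=> n_gt0 fg; rewrite (bigD1 (Ordinal n_gt0)) // [X in _ < X](bigD1 (Ordinal n_gt0)) //=.
by apply: ltr_leD; [apply: fg | apply: ler_sum => i _; apply/ltW].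
Qed.

Lemma exists_le_harmonic n (a c : 'I_n -> R) : (0 < n)%N -> (forall i, 0 < c i) ->
  exists k, a k * c k <= (\sum_i a i) * (\sum_i (c i)^-1)^-1.
Proof.
move=> n_gt0 c_gt0; set S := \sum_i _; set H := \sum_i _.
have H_gt0 : 0 < H by apply: sumr_ord_gt0 => // i; rewrite invr_gt0.
apply/existsP; apply: contraT; rewrite negb_exists => /forallP gt_k.
have : \sum_i S / H / c i < \sum_i a i * c i / c i.
  apply: ltr_sum_ord => // i; rewrite ltr_pM2r ?invr_gt0 ?c_gt0 //.
  by rewrite ltNge; apply: gt_k.
rewrite -mulr_sumr divfK ?gt_eqF // (eq_bigr a) ?ltxx // => i _.
by rewrite mulfK ?gt_eqF.
Qed.

End OrdinalSums.

Section RecursiveWeights.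
Variables (R : realType) (t : tree) (Th : set R) (A : R -> R) (th : R).
Hypotheses (wf : wf_tree t) (HE : expfam Th A) (Xth : meanset Th A th).
Local Notation X := (meanset Th A).
Local Notation d := (kl Th A).

Lemma eq_big_leaves (P : pred (seq nat)) (F G : seq nat -> R) :
  (forall l, l \in leaves t -> P l -> F l = G l) ->
  \sum_(l <- leaves t | P l) F l = \sum_(l <- leaves t | P l) G l.
Proof.
move=> FG; rewrite big_seq_cond [RHS]big_seq_cond.
by apply: eq_bigr => l /andP[]; apply: FG.
Qed.

Lemma big_prefix_restrict (p c : seq nat) (F : seq nat -> R) :
  (forall l, prefix c l -> prefix p l) ->
  \sum_(l <- leaves t | prefix p l) (if prefix c l then F l else 0) =
  \sum_(l <- leaves t | prefix c l) F l.
Proof. by move=> cp; rewrite -big_mkcondr; apply: eq_bigl => l; apply/andb_idl/cp. Qed.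

Section FixedMeans.
Variables (nu : seq nat -> R) (D : seq nat -> R) (W : seq nat -> seq nat -> R).
Hypothesis recW : rec_weights t d th nu D W.
Local Notation a := (win t th nu).

Definition inv_sum (p : seq nat) n := \sum_(i < n) (D (rcons p i))^-1.

Definition harmonic_mix (p : seq nat) n (us : nat -> seq nat -> R) (l : seq nat) :=
  \sum_(i < n) (if prefix (rcons p i) l then us i l / D (rcons p i) / inv_sum p n else 0).

Lemma inv_sum_gt0 p b cs : subtree t p = Some (Node b cs) ->
  (forall i : 'I_(size cs), 0 < D (rcons p i)) -> 0 < inv_sum p (size cs).
Proof.
by move=> tp D_gt0; apply: sumr_ord_gt0 (wf_subtree_size wf tp) _ => i; rewrite invr_gt0.
Qed.

Lemma rec_weights_leaf p : subtree t p = Some Leaf ->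
  D p = (if (a && (th <= nu p)) || (~~ a && (nu p < th)) then d (nu p) th else 0) /\
  (forall l, l \in leaves t -> W p l = (l == p)%:R).
Proof. by move=> tp; have := recW p; rewrite tp. Qed.

Lemma rec_weights_node p b cs : subtree t p = Some (Node b cs) ->
  (if b == a then
     [/\ (exists2 i, (i < size cs)%N & D (rcons p i) = D p),
         (forall i, (i < size cs)%N -> D (rcons p i) <= D p) &
         (0 < D p -> exists2 i, ((i < size cs)%N /\ D (rcons p i) = D p) &
             forall l, l \in leaves t ->
               W p l = if prefix (rcons p i) l then W (rcons p i) l else 0)]
   else if [forall i : 'I_(size cs), 0 < D (rcons p i)] then
     D p = (inv_sum p (size cs))^-1 /\
     (forall l, l \in leaves t -> W p l = harmonic_mix p (size cs) (W \o rcons p) l)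
   else D p = 0) /\
  (D p = 0 -> probvec_on t p (W p)).
Proof. by move=> tp; have := recW p; rewrite tp. Qed.

Lemma rec_weights_max_extremum p b cs : subtree t p = Some (Node b cs) -> b == a ->
  is_extremum true (size cs) (fun i => D (rcons p i)) (D p).
Proof.
move=> tp b_a; have [+ _] := rec_weights_node tp; rewrite b_a => -[[i lt_i Di] le_D _].
by split=> [|j /le_D //]; exists i; rewrite ?Di.
Qed.

Lemma rec_weights_min_gt0 p b cs : subtree t p = Some (Node b cs) -> b != a ->
  (forall i : 'I_(size cs), 0 < D (rcons p i)) ->
  D p = (inv_sum p (size cs))^-1 /\
  (forall l, l \in leaves t -> W p l = harmonic_mix p (size cs) (W \o rcons p) l).
Proof.
move=> tp /negbTE b_a D_gt0; have [+ _] := rec_weights_node tp; rewrite b_a.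
by have -> : [forall i : 'I_(size cs), 0 < D (rcons p i)] by apply/forallP.
Qed.

Lemma rec_weights_min_pos p b cs : subtree t p = Some (Node b cs) -> b != a -> 0 < D p ->
  [/\ forall i : 'I_(size cs), 0 < D (rcons p i),
      D p = (inv_sum p (size cs))^-1 &
      forall l, l \in leaves t -> W p l = harmonic_mix p (size cs) (W \o rcons p) l].
Proof.
move=> tp b_a Dp_gt0; have [+ _] := rec_weights_node tp; rewrite (negbTE b_a).
case: ifP => [/forallP D_gt0 _|_ Dp0]; last by rewrite Dp0 ltxx in Dp_gt0.
by have [? ?] := rec_weights_min_gt0 tp b_a D_gt0.
Qed.

Hypothesis Xnu : forall l, l \in leaves t -> X (nu l).

Lemma recD_ge0 s p : subtree t p = Some s -> 0 <= D p.
Proof.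
move: s p; apply: subtree_ind => [p tp|p b cs tp IH].
  have [-> _] := rec_weights_leaf tp; case: ifP => // _.
  exact: (kl_ge0 HE (Xnu (mem_leaves_leaf tp)) Xth).
have [+ _] := rec_weights_node tp; case: (b == a) => [[[i lt_i <-] _ _]|].
  exact: IH.
case: ifP => [/forallP D_gt0 [-> _]|_ -> //].
by rewrite invr_ge0 sumr_ge0 // => i _; rewrite invr_ge0 ltW.
Qed.

Lemma recD_min_le_child p b cs k : subtree t p = Some (Node b cs) -> b != a ->
  (k < size cs)%N -> D p <= D (rcons p k).
Proof.
move=> tp b_a lt_k; have [+ _] := rec_weights_node tp; rewrite (negbTE b_a).
case: ifP => [/forallP D_gt0 [-> _]|_ ->]; last exact: recD_ge0 (subtree_child tp lt_k).
pose k' := Ordinal lt_k; have Dk_gt0 := D_gt0 k'.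
rewrite -[D (rcons p k)]invrK lef_pV2 ?posrE ?invr_gt0 //.
  by apply: (ler_sum_ord_term k') => i; rewrite invr_ge0 ltW.
exact: inv_sum_gt0 tp D_gt0.
Qed.

Lemma recD_gt0 s p : subtree t p = Some s -> strict_side a th (nodeval t p nu) -> 0 < D p.
Proof.
move: s p; apply: subtree_ind => [p tp|p b cs tp IH].
  rewrite nodeval_leaf // /strict_side; have [-> _] := rec_weights_leaf tp.
  have Xp := Xnu (mem_leaves_leaf tp).
  case: (win t th nu) => /= side.
    by rewrite (ltW side) /=; apply: kl_gt0; rewrite ?gt_eqF.
  by rewrite side /=; apply: kl_gt0; rewrite ?lt_eqF.
move=> /(strict_side_node _ _ _ wf tp) side; have [+ _] := rec_weights_node tp.
case: (b == a) side => [[i lt_i side_i] [_ le_D _]|side].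
  exact: lt_le_trans (IH i lt_i side_i) (le_D i lt_i).
have D_gt0 : [forall i : 'I_(size cs), 0 < D (rcons p i)].
  by apply/forallP => i; apply/IH/side.
by rewrite D_gt0 => -[-> _]; rewrite invr_gt0 (inv_sum_gt0 tp (forallP D_gt0)).
Qed.

Definition cost p (u lam : seq nat -> R) :=
  \sum_(l <- leaves t | prefix p l) u l * d (nu l) (lam l).
Definition mass p (u : seq nat -> R) := \sum_(l <- leaves t | prefix p l) u l.

(* [u] guarantees [D p] in the max-min problem restricted to the subtree of [p]. *)
Definition optimal_at p (u : seq nat -> R) :=
  [/\ forall l, l \in leaves t -> 0 <= u l,
      forall l, l \in leaves t -> ~~ prefix p l -> u l = 0,
      mass p u = 1 &
      forall lam, (forall l, l \in leaves t -> X (lam l)) ->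
        flips a th (nodeval t p lam) -> D p <= cost p u lam].

Lemma cost_ge0 p (u lam : seq nat -> R) : (forall l, l \in leaves t -> 0 <= u l) ->
  (forall l, l \in leaves t -> X (lam l)) -> 0 <= cost p u lam.
Proof.
move=> u_ge0 Xlam; rewrite /cost big_seq_cond; apply: sumr_ge0 => l /andP[l_leaf _].
by rewrite mulr_ge0 ?u_ge0 ?(kl_ge0 HE (Xnu l_leaf) (Xlam l l_leaf)).
Qed.

Lemma mass_ge0 p (u : seq nat -> R) : (forall l, l \in leaves t -> 0 <= u l) -> 0 <= mass p u.
Proof. by move=> u_ge0; rewrite /mass big_seq_cond sumr_ge0 // => l /andP[/u_ge0]. Qed.

Lemma cost_restrict p c (u lam : seq nat -> R) : (forall l, prefix c l -> prefix p l) ->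
  cost p (fun l => if prefix c l then u l else 0) lam = cost c u lam.
Proof.
move=> cp; rewrite /cost -(big_prefix_restrict _ cp); apply: eq_bigr => l _.
by case: ifP; rewrite ?mul0r.
Qed.

Lemma optimal_at_eq p (u v : seq nat -> R) : (forall l, l \in leaves t -> u l = v l) ->
  optimal_at p u -> optimal_at p v.
Proof.
move=> uv [u_ge0 u_out u_mass u_opt]; split.
- by move=> l l_leaf; rewrite -uv ?u_ge0.
- by move=> l l_leaf pl; rewrite -uv ?u_out.
- by rewrite /mass -(eq_big_leaves (F := u)) // => l l_leaf _; rewrite uv.
move=> lam Xlam flip; rewrite /cost -(eq_big_leaves (F := fun l => u l * d (nu l) (lam l))).
  exact: u_opt.
by move=> l l_leaf _; rewrite uv.
Qed.

Lemma optimal_at_leaf p : subtree t p = Some Leaf -> optimal_at p (W p).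
Proof.
move=> tp; have [Dp Wp] := rec_weights_leaf tp; have p_leaf := mem_leaves_leaf tp.
split.
- by move=> l l_leaf; rewrite Wp // ler0n.
- by move=> l l_leaf pl; rewrite Wp //; case: eqP => // lp; rewrite lp prefix_refl in pl.
- by rewrite /mass big_prefix_leaf // Wp // eqxx.
move=> lam Xlam; rewrite nodeval_leaf // /cost big_prefix_leaf // Wp // eqxx mul1r Dp.
have [Xp Xlp] := (Xnu p_leaf, Xlam p p_leaf).
rewrite /flips; case: (win t th nu) => /= flip.
  by case: ifP => [|_]; [rewrite orbF => ?; apply: kl_le_below | apply: kl_ge0].
by case: ifP => [? |_]; [apply: kl_le_above | apply: kl_ge0].
Qed.

Lemma optimal_at_max_child p b cs i (u : seq nat -> R) : subtree t p = Some (Node b cs) -> b == a ->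
  (i < size cs)%N -> D (rcons p i) = D p -> optimal_at (rcons p i) u ->
  optimal_at p (fun l => if prefix (rcons p i) l then u l else 0).
Proof.
move=> tp b_a lt_i Di [u_ge0 u_out u_mass u_opt]; have ip := @prefix_rconsW p i.
split.
- by move=> l l_leaf; case: ifP => // _; apply: u_ge0.
- by move=> l l_leaf pl; case: ifP => // /ip; rewrite (negbTE pl).
- by rewrite /mass big_prefix_restrict.
move=> lam Xlam /(flips_node _ _ _ wf tp); rewrite b_a => flip_all.
by rewrite cost_restrict // -Di; apply/u_opt/flip_all.
Qed.

Lemma big_harmonic_mix p n (us : nat -> seq nat -> R) (F : seq nat -> R) :
  \sum_(l <- leaves t | prefix p l) harmonic_mix p n us l * F l =
  \sum_(i < n) (\sum_(l <- leaves t | prefix (rcons p i) l) us i l * F l)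
                / D (rcons p i) / inv_sum p n.
Proof.
under eq_bigr do rewrite mulr_suml.
rewrite exchange_big /=; apply: eq_bigr => i _.
rewrite -(big_prefix_restrict _ (@prefix_rconsW p i)).
rewrite !mulr_suml; apply: eq_bigr => l _.
by case: ifP => _; rewrite ?mul0r //; ring.
Qed.

Lemma optimal_at_min_children p b cs (us : nat -> seq nat -> R) :
  subtree t p = Some (Node b cs) -> b != a ->
  (forall i : 'I_(size cs), 0 < D (rcons p i)) -> D p = (inv_sum p (size cs))^-1 ->
  (forall i : 'I_(size cs), optimal_at (rcons p i) (us i)) ->
  optimal_at p (harmonic_mix p (size cs) us).
Proof.
move=> tp b_a D_gt0 Dp us_opt; set S := inv_sum p (size cs).
have S_gt0 : 0 < S := inv_sum_gt0 tp D_gt0.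
split.
- move=> l l_leaf; apply: sumr_ge0 => i _; case: ifP => // _.
  by rewrite !divr_ge0 ?(ltW (D_gt0 i)) ?(ltW S_gt0) //; case: (us_opt i) => + _ _ _; apply.
- move=> l l_leaf pl; apply: big1 => i _; case: ifP => // /prefix_rconsW.
  by rewrite (negbTE pl).
- rewrite /mass; under eq_bigr do rewrite -[harmonic_mix _ _ _ _]mulr1.
  rewrite big_harmonic_mix -/S (eq_bigr (fun i : 'I__ => (D (rcons p i))^-1 / S)).
    by rewrite -mulr_suml mulfV ?gt_eqF.
  move=> i _; case: (us_opt i) => _ _ + _; rewrite /mass => mass_i.
  by under eq_bigr do rewrite mulr1; rewrite mass_i mul1r.
move=> lam Xlam /(flips_node _ _ _ wf tp); rewrite (negbTE b_a) => -[k lt_k flip_k].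
rewrite /cost big_harmonic_mix -/S; pose k' := Ordinal lt_k.
apply: le_trans (ler_sum_ord_term k' _); last first.
  move=> i; rewrite !divr_ge0 ?(ltW (D_gt0 i)) ?(ltW S_gt0) // (cost_ge0 _ _ Xlam) //.
  by case: (us_opt i).
rewrite Dp /= -[X in X <= _]mul1r; apply: ler_wpM2r; first by rewrite invr_ge0 ltW.
by rewrite ler_pdivlMr ?(D_gt0 k') // mul1r; case: (us_opt k') => _ _ _; apply.
Qed.

Lemma optimal_at_probvec p (u : seq nat -> R) : D p = 0 -> probvec_on t p u -> optimal_at p u.
Proof.
move=> Dp0 [u_ge0 [u_out u_mass]].
have {}u_ge0 l : l \in leaves t -> 0 <= u l.
  by move=> l_leaf; case pl: (prefix p l); [apply: u_ge0 | rewrite u_out ?pl].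
by split=> // lam Xlam _; rewrite Dp0; apply: cost_ge0.
Qed.

Lemma optimal_at_W s p : subtree t p = Some s -> optimal_at p (W p).
Proof.
move: s p; apply: subtree_ind => [|p b cs tp IH]; first exact: optimal_at_leaf.
have [node Wp_prob] := rec_weights_node tp.
have [Dp0|Dp_neq0] := eqVneq (D p) 0; first exact/optimal_at_probvec/Wp_prob.
have Dp_gt0 : 0 < D p by rewrite lt_def Dp_neq0 (recD_ge0 tp).
case b_a: (b == a) node => node.
  case: node => _ _ /(_ Dp_gt0) [i [lt_i Di] Wp].
  apply: optimal_at_eq (optimal_at_max_child tp b_a lt_i Di (IH i lt_i)).
  by move=> l l_leaf; rewrite Wp.
have [D_gt0 Dp Wp] := rec_weights_min_pos tp (negbT b_a) Dp_gt0.
apply: optimal_at_eq (optimal_at_min_children tp (negbT b_a) D_gt0 Dp (fun i => IH i (ltn_ord i))).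
by move=> l l_leaf; rewrite Wp.
Qed.

(* The matching upper bound: an alternative flipping [p] that is almost as cheap. *)
Definition cheap_alt p (w : seq nat -> R) (eps : R) (lam : seq nat -> R) :=
  [/\ forall l, l \in leaves t -> X (lam l), flips a th (nodeval t p lam),
      forall l, ~~ prefix p l -> lam l = nu l &
      cost p w lam <= mass p w * D p + eps].

Lemma exists_cheap_leaf_value p (w : seq nat -> R) (eps : R) :
  subtree t p = Some Leaf -> 0 <= w p -> 0 < eps ->
  exists z, [/\ X z, flips a th z & w p * d (nu p) z <= w p * D p + eps].
Proof.
move=> tp wp_ge0 eps_gt0; have [Dp _] := rec_weights_leaf tp.
have Xp := Xnu (mem_leaves_leaf tp); have Dp_ge0 := recD_ge0 tp.
have stay : w p * d (nu p) (nu p) <= w p * D p + eps.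
  by rewrite kl_xx mulr0 addr_ge0 ?mulr_ge0 // ltW.
rewrite /flips; move: Dp; case: (win t th nu) => /= Dp.
  case: (leP th (nu p)) Dp => [th_p|p_th] Dp; last by exists (nu p).
  have epsw_gt0 : 0 < eps / (w p + 1) by apply: divr_gt0 => //; lra.
  have [z [Xz z_th dz]] := kl_approx_below HE Xp Xth epsw_gt0.
  exists z; split=> //; rewrite Dp orbF.
  have : w p * (eps / (w p + 1)) + eps / (w p + 1) = eps.
    by field; apply/lt0r_neq0; lra.
  by have := ler_wpM2l wp_ge0 dz; rewrite mulrDr; lra.
case: (ltP (nu p) th) Dp => [p_th|th_p] Dp; last by exists (nu p).
by exists th; rewrite Dp lexx lerDl ltW.
Qed.

Lemma cheap_alt_leaf p (w : seq nat -> R) (eps : R) : subtree t p = Some Leaf ->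
  (forall l, l \in leaves t -> 0 <= w l) -> 0 < eps -> exists lam, cheap_alt p w eps lam.
Proof.
move=> tp w_ge0 eps_gt0; have p_leaf := mem_leaves_leaf tp.
have [z [Xz flip_z dz]] := exists_cheap_leaf_value tp (w_ge0 p p_leaf) eps_gt0.
exists (fun l => if l == p then z else nu l); split.
- by move=> l l_leaf; case: eqP => // _; apply: Xnu.
- by rewrite nodeval_leaf // eqxx.
- by move=> l pl; case: eqP => // lp; rewrite lp prefix_refl in pl.
- by rewrite /cost /mass !big_prefix_leaf // eqxx.
Qed.

Lemma cheap_alt_min_child p b cs k (w : seq nat -> R) (eps : R) lam :
  subtree t p = Some (Node b cs) -> b != a -> (k < size cs)%N ->
  mass (rcons p k) w * D (rcons p k) <= mass p w * D p ->
  cheap_alt (rcons p k) w eps lam -> cheap_alt p w eps lam.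
Proof.
move=> tp b_a lt_k mass_k [Xlam flip_k out_k cost_k]; split => //.
- by apply/(flips_node _ _ _ wf tp); rewrite (negbTE b_a); exists k.
- by move=> l pl; apply: out_k; apply: contra pl; apply: prefix_rconsW.
have -> : cost p w lam = cost (rcons p k) w lam.
  rewrite -(cost_restrict _ _ (@prefix_rconsW p k)) /cost; apply: eq_bigr => l _.
  by case: ifP => // kl; rewrite out_k ?kl // kl_xx !mulr0.
by apply: le_trans cost_k _; rewrite lerD2r.
Qed.

Lemma min_child_mass_le p b cs (w : seq nat -> R) :
  subtree t p = Some (Node b cs) -> b != a ->
  exists2 k, (k < size cs)%N & mass (rcons p k) w * D (rcons p k) <= mass p w * D p.
Proof.
move=> tp /negbTE b_a; have [+ _] := rec_weights_node tp; rewrite b_a.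
case: ifP => [/forallP D_gt0 [Dp _]|/negbT/forallPn[k]].
  have [k] := exists_le_harmonic (fun i => mass (rcons p i) w) (wf_subtree_size wf tp) D_gt0.
  by rewrite Dp /mass (big_prefix_node _ tp); exists k.
rewrite -leNgt le_eqVlt ltNge (recD_ge0 (subtree_child tp (ltn_ord k))) orbF => /eqP Dk Dp.
by exists k => //; rewrite Dk Dp !mulr0.
Qed.

(* [Lam i] on the subtree of the child [i] of [p], and [nu] elsewhere. *)
Definition splice p (Lam : nat -> seq nat -> R) (l : seq nat) :=
  if prefix p l && (size p < size l)%N then Lam (nth 0%N l (size p)) l else nu l.

Lemma splice_child p i (Lam : nat -> seq nat -> R) l :
  prefix (rcons p i) l -> splice p Lam l = Lam i l.
Proof.
move=> il; have [nth_l lt_p] := prefix_rcons_nth il.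
by rewrite /splice (prefix_rconsW il) lt_p nth_l.
Qed.

Lemma cheap_alt_max_node p b cs (w : seq nat -> R) (eps : R) (Lam : nat -> seq nat -> R) :
  subtree t p = Some (Node b cs) -> b == a -> (forall l, l \in leaves t -> 0 <= w l) ->
  (forall i, (i < size cs)%N -> cheap_alt (rcons p i) w (eps / (size cs)%:R) (Lam i)) ->
  cheap_alt p w eps (splice p Lam).
Proof.
move=> tp b_a w_ge0 Lam_cheap; have [+ _] := rec_weights_node tp; rewrite b_a.
case=> _ le_D _; split.
- move=> l l_leaf; rewrite /splice; case: ifPn => [/andP[pl _]|_]; last exact: Xnu.
  have [i lt_i il] := prefix_leaf_child tp l_leaf pl.
  by have [-> _] := prefix_rcons_nth il; case: (Lam_cheap i lt_i) => + _ _ _; apply.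
- apply/(flips_node _ _ _ wf tp); rewrite b_a => i lt_i.
  rewrite (eq_nodeval (l2 := Lam i)); first by case: (Lam_cheap i lt_i).
  by move=> l _; apply: splice_child.
- by move=> l pl; rewrite /splice (negbTE pl).
rewrite /cost /mass !(big_prefix_node _ tp) mulr_suml.
apply: (@le_trans _ _ (\sum_(i < size cs) (mass (rcons p i) w * D p + eps / (size cs)%:R))).
  apply: ler_sum => i _; have [_ _ _ cost_i] := Lam_cheap i (ltn_ord i).
  rewrite (eq_bigr (fun l => w l * d (nu l) (Lam i l))); last first.
    by move=> l il; rewrite (splice_child _ il).
  by apply: le_trans cost_i _; rewrite lerD2r ler_wpM2l ?mass_ge0 ?le_D.
rewrite big_split /= sumr_const card_ord -[_ *+ size cs]mulr_natr divfK //.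
by rewrite pnatr_eq0 -lt0n (wf_subtree_size wf tp).
Qed.

Lemma exists_cheap_alt s p : subtree t p = Some s ->
  forall (w : seq nat -> R) (eps : R), (forall l, l \in leaves t -> 0 <= w l) -> 0 < eps ->
  exists lam, cheap_alt p w eps lam.
Proof.
move: s p; apply: subtree_ind => [p tp|p b cs tp IH] w eps w_ge0 eps_gt0.
  exact: cheap_alt_leaf.
case b_a: (b == a); last first.
  have [k lt_k mass_k] := min_child_mass_le w tp (negbT b_a).
  have [lam lam_cheap] := IH k lt_k w eps w_ge0 eps_gt0.
  by exists lam; apply: cheap_alt_min_child tp (negbT b_a) lt_k mass_k lam_cheap.
have epsn_gt0 : 0 < eps / (size cs)%:R by rewrite divr_gt0 ?ltr0n ?(wf_subtree_size wf tp).
have /choice[Lam Lam_cheap] : forall i, exists lam,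
    (i < size cs)%N -> cheap_alt (rcons p i) w (eps / (size cs)%:R) lam.
  move=> i; case: (ltnP i (size cs)) => [lt_i|]; last by exists nu.
  by have [lam ?] := IH i lt_i w _ w_ge0 epsn_gt0; exists lam.
by exists (splice p Lam); apply: cheap_alt_max_node tp b_a w_ge0 Lam_cheap.
Qed.

Lemma cost_root (u lam : seq nat -> R) :
  cost [::] u lam = \sum_(l <- leaves t) u l * d (nu l) (lam l).
Proof. by apply: eq_bigl => l; rewrite prefix0s. Qed.

Lemma mass_root (u : seq nat -> R) : mass [::] u = \sum_(l <- leaves t) u l.
Proof. by apply: eq_bigl => l; rewrite prefix0s. Qed.

Lemma maxmin_obj_le_root (w : seq nat -> R) : simplex t w -> maxmin_obj t X d th nu w <= D [::].
Proof.
case=> w_ge0 w_mass; rewrite /maxmin_obj; set S := [set _ | _ in _].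
have S_lb : has_lbound S by exists 0 => _ [lam [Xlam _] <-]; rewrite -cost_root cost_ge0.
apply/ler_addgt0Pr => e e_gt0.
have [lam [Xlam flip _ cost_lam]] := exists_cheap_alt (subtree_nil t) w_ge0 e_gt0.
have S_lam : S (cost [::] w lam).
  by exists lam; [split=> //; rewrite -flips_root | rewrite cost_root].
by apply: le_trans (ge_inf S_lb S_lam) _; rewrite mass_root w_mass mul1r in cost_lam.
Qed.

Lemma root_le_maxmin_obj (u : seq nat -> R) :
  optimal_at [::] u -> D [::] <= maxmin_obj t X d th nu u.
Proof.
case=> u_ge0 _ _ u_opt; rewrite /maxmin_obj; apply: lb_le_inf.
  have [lam [Xlam flip _ _]] := exists_cheap_alt (subtree_nil t) u_ge0 ltr01.
  by exists (cost [::] u lam), lam; [split=> //; rewrite -flips_root | rewrite cost_root].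
by move=> _ [lam [Xlam alt] <-]; rewrite -cost_root u_opt ?flips_root.
Qed.

Lemma optimal_at_root_maximizer (u : seq nat -> R) :
  optimal_at [::] u -> is_maximizer t X d th nu u.
Proof.
move=> u_opt; split; first by case: u_opt => u_ge0 _ u_mass _; split; rewrite // -mass_root.
by move=> w w_simplex; apply: le_trans (maxmin_obj_le_root w_simplex) (root_le_maxmin_obj u_opt).
Qed.

(* The nodes on which [W [::]] puts weight: all children of an active Q-node and
   the selected argmax child of an active P-node. *)
Inductive active : seq nat -> Prop :=
| active_root : 0 < D [::] -> active [::]
| active_child q i b cs : active q -> subtree t q = Some (Node b cs) -> (i < size cs)%N ->
    (b == a -> D (rcons q i) = D q) -> active (rcons q i).

Lemma active_gt0 q : active q -> 0 < D q.
Proof.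
elim=> // {}q i b cs _ Dq_gt0 tq lt_i Di; case b_a: (b == a); first by rewrite Di.
by have [D_gt0 _ _] := rec_weights_min_pos tq (negbT b_a) Dq_gt0; apply: (D_gt0 (Ordinal lt_i)).
Qed.

Definition lifts_to_root p (K : R) (g : seq nat -> R) :=
  forall u, optimal_at p u -> optimal_at [::] (fun l => if prefix p l then K * u l else g l).

Lemma lifts_to_root_max_child q b cs i K g :
  subtree t q = Some (Node b cs) -> b == a -> (i < size cs)%N -> D (rcons q i) = D q ->
  lifts_to_root q K g -> lifts_to_root (rcons q i) K (fun l => if prefix q l then 0 else g l).
Proof.
move=> tq b_a lt_i Di lift u /(optimal_at_max_child tq b_a lt_i Di)/lift.
apply: optimal_at_eq => l _ /=; case: (boolP (prefix (rcons q i) l)) => [il|_].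
  by rewrite (prefix_rconsW il).
by rewrite mulr0.
Qed.

Lemma lifts_to_root_min_child q b cs i K g :
  subtree t q = Some (Node b cs) -> b != a -> 0 < D q -> (i < size cs)%N ->
  lifts_to_root q K g ->
  lifts_to_root (rcons q i) (K / D (rcons q i) / inv_sum q (size cs))
    (fun l => if prefix q l then K * W q l else g l).
Proof.
move=> tq b_a Dq_gt0 lt_i lift u u_opt; pose i' := Ordinal lt_i.
have [D_gt0 Dq Wq] := rec_weights_min_pos tq b_a Dq_gt0.
pose us j := if j == i then u else W (rcons q j).
have us_opt (j : 'I_(size cs)) : optimal_at (rcons q j) (us j).
  by rewrite /us; case: eqP => [->//|_]; apply: optimal_at_W (subtree_child tq (ltn_ord j)).
have := lift _ (optimal_at_min_children tq b_a D_gt0 Dq us_opt); apply: optimal_at_eq => l l_leaf.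
have S_gt0 := inv_sum_gt0 tq D_gt0.
case il: (prefix (rcons q i) l).
  rewrite (prefix_rconsW il) /harmonic_mix (bigD1 i') //= il /us eqxx big1 ?addr0.
    by field; rewrite !gt_eqF ?(D_gt0 i').
  move=> j ne_ji; case: ifP => // jl; case/eqP: ne_ji; apply/val_inj.
  exact: prefix_rcons_inj jl il.
case: ifP => // _; rewrite Wq //; congr (_ * _); apply: eq_bigr => j _.
by case: ifP => // jl; rewrite /us; case: eqP => // ji; rewrite -ji jl in il.
Qed.

Lemma active_lifts p : active p -> exists2 K : R, 0 < K & exists g, lifts_to_root p K g.
Proof.
elim=> [_|q i b cs act_q [K K_gt0 [g lift]] tq lt_i Di].
  by exists 1 => //; exists (fun=> 0) => u; apply: optimal_at_eq => l _; rewrite prefix0s mul1r.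
have Dq_gt0 := active_gt0 act_q.
case b_a: (b == a).
  by exists K => //; eexists; apply: lifts_to_root_max_child tq b_a lt_i (Di b_a) lift.
have [D_gt0 _ _] := rec_weights_min_pos tq (negbT b_a) Dq_gt0.
have S_gt0 := inv_sum_gt0 tq D_gt0.
exists (K / D (rcons q i) / inv_sum q (size cs)).
  by rewrite !divr_gt0 ?(D_gt0 (Ordinal lt_i)).
by eexists; apply: lifts_to_root_min_child tq (negbT b_a) Dq_gt0 lt_i lift.
Qed.

Lemma optimal_at_support p (u : seq nat -> R) : optimal_at p u ->
  exists2 l, l \in leaves t & prefix p l && (u l != 0).
Proof.
case=> _ _ u_mass _; apply: contrapT => no_support; move: u_mass; rewrite /mass big1_seq.
  by move/eqP; rewrite eq_sym oner_eq0.
move=> l /andP[pl l_leaf]; apply: contrapT => /eqP u_l.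
by apply: no_support; exists l; rewrite ?pl.
Qed.

Hypothesis maximizer_unique : forall w1 w2,
  is_maximizer t X d th nu w1 -> is_maximizer t X d th nu w2 ->
  forall l, l \in leaves t -> w1 l = w2 l.

Lemma active_argmax_unique p b cs i j : active p -> subtree t p = Some (Node b cs) ->
  b == a -> (i < size cs)%N -> (j < size cs)%N ->
  D (rcons p i) = D p -> D (rcons p j) = D p -> i = j.
Proof.
move=> act_p tp b_a lt_i lt_j Di Dj; apply/eqP; apply: contraT => ne_ij.
have [K K_gt0 [g lift]] := active_lifts act_p.
have opt_i := optimal_at_W (subtree_child tp lt_i).
have opt_j := optimal_at_W (subtree_child tp lt_j).
have max_i := optimal_at_root_maximizer (lift _ (optimal_at_max_child tp b_a lt_i Di opt_i)).
have max_j := optimal_at_root_maximizer (lift _ (optimal_at_max_child tp b_a lt_j Dj opt_j)).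
have [l l_leaf /andP[il Wl]] := optimal_at_support opt_i.
have jl : prefix (rcons p j) l = false.
  by apply/negP => jl; rewrite (prefix_rcons_inj il jl) eqxx in ne_ij.
have /eqP := maximizer_unique max_i max_j l_leaf.
by rewrite (prefix_rconsW il) il jl mulr0 mulf_eq0 (negbTE Wl) orbF gt_eqF.
Qed.

End FixedMeans.
End RecursiveWeights.

Lemma filter_forall_seq T (F : set_system T) (I : eqType) (r : seq I) (P : I -> T -> Prop) :
  Filter F -> (forall i, i \in r -> F (P i)) -> F (fun z => forall i, i \in r -> P i z).
Proof.
move=> FF; elim: r => [|i r IH] Pr; first exact: filterS filterT.
have Pi := Pr i (mem_head _ _); have {IH} := IH (fun j jr => Pr j (@mem_behead _ (i :: r) j jr)).
by apply: filterS2 Pi => z Pi_z Pr_z j; rewrite inE => /predU1P[->|/Pr_z].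
Qed.

Lemma filter_forall_fin T (F : set_system T) (I : finType) (P : I -> T -> Prop) :
  Filter F -> (forall i, F (P i)) -> F (fun z => forall i, P i z).
Proof.
move=> FF FP; apply: filterS (filter_forall_seq (r := enum I) FF (fun i _ => FP i)).
by move=> z Pz i; apply/Pz/mem_enum.
Qed.

Lemma cvg_sum_ord T (F : set_system T) (R : realType) n (f : 'I_n -> T -> R) (x : 'I_n -> R) :
  Filter F -> (forall i, f i @ F --> x i) ->
  (fun z => \sum_(i < n) f i z) @ F --> \sum_(i < n) x i.
Proof. by move=> FF f_cvg; apply: cvg_big => //; exact: add_continuous. Qed.

Lemma cvg_near_eq T (F : set_system T) (U : topologicalType) (f g : T -> U) (x : U) :
  Filter F -> F (fun z => f z = g z) -> g @ F --> x -> f @ F --> x.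
Proof. by move=> FF fg; apply: cvg_trans; apply: near_eq_cvg; apply: filterS fg. Qed.

Lemma threshold_side_near (R : realType) (th x0 m : R) : x0 != th ->
  `|m - x0| <= `|x0 - th| / 2 -> (th <= m) = (th <= x0) /\ (m < th) = (x0 < th).
Proof.
move=> x0_th; rewrite ler_norml => /andP[lo hi].
case: (ltgtP x0 th) x0_th lo hi => // x0th _.
  by rewrite ltr0_norm ?subr_lt0 // => lo hi; split; [apply/negbTE; rewrite -ltNge|]; lra.
by rewrite gtr0_norm ?subr_gt0 // => lo hi; split; [|apply/negbTE; rewrite -leNgt]; lra.
Qed.

(** * Continuity of the recursive weights *)

Section Continuity.
Variables (R : realType) (t : tree) (Th : set R) (A : R -> R) (th : R) (mu : seq nat -> R).
Hypotheses (wf : wf_tree t) (HE : expfam Th A) (Xth : meanset Th A th).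
Hypotheses (Xmu : forall l, l \in leaves t -> meanset Th A (mu l)) (mu_th : gval t mu != th).
Local Notation X := (meanset Th A).
Local Notation d := (kl Th A).

Record weighting := Weighting {
  mu_of : seq nat -> R; D_of : seq nat -> R; W_of : seq nat -> seq nat -> R }.

Definition mean_close (xi : R) (m : seq nat -> R) :=
  forall l, l \in leaves t -> X (m l) /\ mu l - xi <= m l <= mu l + xi.

(* Recursive weights [(D', W')] for means [mu'] near [mu]: convergence along this
   filter is the uniform statement of the theorem. *)
Definition mu_nbhs : set_system weighting := fun Q => exists2 xi : R, 0 < xi &
  forall z, mean_close xi (mu_of z) -> rec_weights t d th (mu_of z) (D_of z) (W_of z) -> Q z.

Lemma mean_close_le xi1 xi2 m : xi1 <= xi2 -> mean_close xi1 m -> mean_close xi2 m.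
Proof.
move=> xi12 m1 l l_leaf; have [Xl /andP[lo hi]] := m1 l l_leaf.
by split=> //; apply/andP; split; lra.
Qed.

Global Instance mu_nbhs_filter : Filter mu_nbhs.
Proof.
split; first by exists 1.
  move=> P Q [xi1 xi1_gt0 P1] [xi2 xi2_gt0 Q2]; exists (Num.min xi1 xi2).
    by rewrite lt_min xi1_gt0.
  move=> z z_close z_rec; split; [apply: P1 | apply: Q2] => //; apply: mean_close_le z_close.
    by rewrite ge_min lexx.
  by rewrite ge_min lexx orbT.
by move=> P Q PQ [xi xi_gt0 P_xi]; exists xi => // z ? ?; apply/PQ/P_xi.
Qed.

Lemma near_dist (e : R) : 0 < e ->
  mu_nbhs (fun z => forall l, l \in leaves t -> `|mu_of z l - mu l| <= e).
Proof.
move=> e_gt0; exists e => // z z_close _ l l_leaf; have [_ /andP[lo hi]] := z_close l l_leaf.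
by rewrite ler_norml; apply/andP; split; lra.
Qed.

Lemma near_win : mu_nbhs (fun z => win t th (mu_of z) = win t th mu).
Proof.
have e_gt0 : 0 < `|gval t mu - th| / 2 by rewrite divr_gt0 // normr_gt0 subr_eq0.
apply: filterS (near_dist e_gt0) => z z_near.
have z_mu := gval_dist_le (ltW e_gt0) z_near.
by rewrite /win; have [-> _] := threshold_side_near mu_th z_mu.
Qed.

Lemma near_mu : mu_nbhs (fun z =>
  [/\ forall l, l \in leaves t -> X (mu_of z l),
      rec_weights t d th (mu_of z) (D_of z) (W_of z) &
      win t th (mu_of z) = win t th mu]).
Proof.
have near_rec : mu_nbhs (fun z => (forall l, l \in leaves t -> X (mu_of z l)) /\
    rec_weights t d th (mu_of z) (D_of z) (W_of z)).
  by exists 1 => // z z_close z_rec; split=> // l /z_close[].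
by apply: filterS2 near_rec near_win => z [? ?] ?; split.
Qed.

Variables (D0 : seq nat -> R) (W0 : seq nat -> seq nat -> R).
Hypothesis rec0 : rec_weights t d th mu D0 W0.

Lemma D_cvg_leaf p : subtree t p = Some Leaf -> (fun z => D_of z p) @ mu_nbhs --> D0 p.
Proof.
move=> tp; apply/cvgrPdist_lt => e e_gt0.
have [D0p _] := rec_weights_leaf rec0 tp; have p_leaf := mem_leaves_leaf tp.
have [del del_gt0 kl_del] := kl_continuous_fst HE Xth (Xmu p_leaf) e_gt0.
have [mu_p|mu_p] := eqVneq (mu p) th.
  have D0p0 : D0 p = 0 by rewrite D0p mu_p kl_xx; case: ifP.
  have del2_gt0 : 0 < del / 2 by rewrite divr_gt0.
  apply: filterS2 near_mu (near_dist del2_gt0) => z [Xz z_rec _] z_near.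
  have [-> _] := rec_weights_leaf z_rec tp; rewrite D0p0 sub0r normrN.
  case: ifP => _; last by rewrite normr0.
  have := kl_del _ (Xz _ p_leaf); rewrite [in d (mu p) th]mu_p kl_xx subr0; apply.
  by have := z_near p p_leaf; lra.
have eta_gt0 : 0 < Num.min (del / 2) (`|mu p - th| / 2).
  by rewrite lt_min !divr_gt0 // normr_gt0 subr_eq0.
apply: filterS2 near_mu (near_dist eta_gt0) => z [Xz z_rec z_win] z_near.
have [-> _] := rec_weights_leaf z_rec tp; rewrite D0p z_win.
have := z_near p p_leaf; rewrite le_min => /andP[z_del z_th].
have [-> ->] := threshold_side_near mu_p z_th.
case: ifP => _; last by rewrite subrr normr0.
by rewrite distrC; apply: kl_del; [apply: Xz | lra].
Qed.

Lemma D_cvg_max p b cs : subtree t p = Some (Node b cs) -> b == win t th mu ->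
  (forall i, (i < size cs)%N -> (fun z => D_of z (rcons p i)) @ mu_nbhs --> D0 (rcons p i)) ->
  (fun z => D_of z p) @ mu_nbhs --> D0 p.
Proof.
move=> tp b_a D_cvg; apply/cvgrPdist_lt => e e_gt0.
have e2_gt0 : 0 < e / 2 by rewrite divr_gt0.
have near_children : mu_nbhs (fun z =>
    forall i : 'I_(size cs), `|D0 (rcons p i) - D_of z (rcons p i)| < e / 2).
  by apply: filter_forall_fin => i; move/cvgrPdist_lt: (D_cvg i (ltn_ord i)); apply.
apply: filterS2 near_mu near_children => z [_ z_rec z_win] z_close.
have ext0 := rec_weights_max_extremum rec0 tp b_a.
have b_az : b == win t th (mu_of z) by rewrite z_win.
have extz := rec_weights_max_extremum z_rec tp b_az.
suff : `|D0 p - D_of z p| <= e / 2 by lra.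
by apply: extremum_dist_le ext0 extz _ => i lt_i; apply: ltW (z_close (Ordinal lt_i)).
Qed.

Lemma D_cvg_min_pos p b cs : subtree t p = Some (Node b cs) -> b != win t th mu ->
  (forall i : 'I_(size cs), 0 < D0 (rcons p i)) ->
  (forall i, (i < size cs)%N -> (fun z => D_of z (rcons p i)) @ mu_nbhs --> D0 (rcons p i)) ->
  (fun z => D_of z p) @ mu_nbhs --> D0 p.
Proof.
move=> tp b_a D0_gt0 D_cvg.
have near_pos : mu_nbhs (fun z => forall i : 'I_(size cs), 0 < D_of z (rcons p i)).
  apply: filter_forall_fin => i; move/cvgrPdist_lt: (D_cvg i (ltn_ord i)) => /(_ _ (D0_gt0 i)).
  by apply: filterS => z; rewrite ltr_norml => /andP[? ?]; lra.
apply: (@cvg_near_eq _ _ _ _ (fun z => (inv_sum (D_of z) p (size cs))^-1)).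
  apply: filterS2 near_mu near_pos => z [_ z_rec z_win] z_pos.
  have b_az : b != win t th (mu_of z) by rewrite z_win.
  by have [-> _] := rec_weights_min_gt0 z_rec tp b_az z_pos.
have [-> _] := rec_weights_min_gt0 rec0 tp b_a D0_gt0.
have S_gt0 := inv_sum_gt0 wf tp D0_gt0.
apply: cvgV; first by rewrite gt_eqF.
by apply: cvg_sum_ord => i; apply: cvgV; [rewrite gt_eqF | apply: D_cvg].
Qed.

Lemma D_cvg_min_zero p b cs k : subtree t p = Some (Node b cs) -> b != win t th mu ->
  (k < size cs)%N -> D0 (rcons p k) = 0 ->
  (fun z => D_of z (rcons p k)) @ mu_nbhs --> D0 (rcons p k) ->
  (fun z => D_of z p) @ mu_nbhs --> D0 p.
Proof.
move=> tp b_a lt_k D0k Dk_cvg; have tpk := subtree_child tp lt_k.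
have -> : D0 p = 0.
  apply/eqP; rewrite eq_le (recD_ge0 HE Xth rec0 Xmu tp) andbT -D0k.
  exact (recD_min_le_child wf HE Xth rec0 Xmu tp b_a lt_k).
apply/cvgrPdist_lt => e e_gt0; move/cvgrPdist_lt: Dk_cvg => /(_ _ e_gt0).
apply: filterS2 near_mu => z [Xz z_rec z_win]; rewrite D0k !sub0r !normrN.
have b_az : b != win t th (mu_of z) by rewrite z_win.
rewrite !ger0_norm ?(recD_ge0 HE Xth z_rec Xz tp) ?(recD_ge0 HE Xth z_rec Xz tpk) //.
exact/le_lt_trans/(recD_min_le_child wf HE Xth z_rec Xz tp b_az lt_k).
Qed.

Lemma D_cvg s p : subtree t p = Some s -> (fun z => D_of z p) @ mu_nbhs --> D0 p.
Proof.
move: s p; apply: subtree_ind => [|p b cs tp D_cvg]; first exact: D_cvg_leaf.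
case b_a: (b == win t th mu); first exact: D_cvg_max tp b_a D_cvg.
have [D0_gt0|/forallPn[k]] := boolP [forall i : 'I_(size cs), 0 < D0 (rcons p i)].
  by apply: D_cvg_min_pos tp (negbT b_a) (forallP D0_gt0) D_cvg.
have tpk := subtree_child tp (ltn_ord k).
rewrite -leNgt le_eqVlt ltNge (recD_ge0 HE Xth rec0 Xmu tpk) orbF => /eqP D0k.
exact: D_cvg_min_zero tp (negbT b_a) (ltn_ord k) D0k (D_cvg k (ltn_ord k)).
Qed.

Lemma near_D_gt0 s p : subtree t p = Some s -> 0 < D0 p -> mu_nbhs (fun z => 0 < D_of z p).
Proof.
move=> tp Dp_gt0; move/cvgrPdist_lt: (D_cvg tp) => /(_ _ Dp_gt0).
by apply: filterS => z; rewrite ltr_norml => /andP[? ?]; lra.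
Qed.

Lemma W_cvg_leaf p l : subtree t p = Some Leaf -> l \in leaves t ->
  (fun z => W_of z p l) @ mu_nbhs --> W0 p l.
Proof.
move=> tp l_leaf; apply: (@cvg_near_eq _ _ _ _ (fun=> W0 p l)); last exact: cvg_cst.
apply: filterS near_mu => z [_ z_rec _].
by have [_ -> //] := rec_weights_leaf z_rec tp; have [_ -> //] := rec_weights_leaf rec0 tp.
Qed.

Hypothesis maximizer_unique : forall w1 w2,
  is_maximizer t X d th mu w1 -> is_maximizer t X d th mu w2 ->
  forall l, l \in leaves t -> w1 l = w2 l.

Lemma near_argmax_unique p b cs i : active t th mu D0 p -> subtree t p = Some (Node b cs) ->
  b == win t th mu -> (i < size cs)%N -> D0 (rcons p i) = D0 p ->
  mu_nbhs (fun z => forall j : 'I_(size cs), j != i :> nat -> D_of z (rcons p j) < D_of z p).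
Proof.
move=> act_p tp b_a lt_i Di; have [+ _] := rec_weights_node rec0 tp; rewrite b_a => -[_ le_D _].
apply: filter_forall_fin => j; have [->|ne_ji] := eqVneq (j : nat) i.
  by apply: filterS filterT.
have gap : 0 < (D0 p - D0 (rcons p j)) / 2.
  rewrite divr_gt0 // subr_gt0 lt_neqAle le_D // andbT; apply: contra ne_ji => /eqP Dj.
  apply/eqP; exact (active_argmax_unique wf HE Xth rec0 Xmu maximizer_unique
    act_p tp b_a (ltn_ord j) lt_i Dj Di).
move/cvgrPdist_lt: (D_cvg tp) => /(_ _ gap) near_p.
move/cvgrPdist_lt: (D_cvg (subtree_child tp (ltn_ord j))) => /(_ _ gap) near_j.
by apply: filterS2 near_p near_j => z; rewrite !ltr_norml => /andP[? ?] /andP[? ?] _; lra.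
Qed.

Lemma W_cvg_max p b cs l : active t th mu D0 p -> subtree t p = Some (Node b cs) ->
  b == win t th mu -> l \in leaves t ->
  (forall i, (i < size cs)%N -> active t th mu D0 (rcons p i) ->
     (fun z => W_of z (rcons p i) l) @ mu_nbhs --> W0 (rcons p i) l) ->
  (fun z => W_of z p l) @ mu_nbhs --> W0 p l.
Proof.
move=> act_p tp b_a l_leaf W_cvg_child; have Dp_gt0 := active_gt0 rec0 act_p.
have [+ _] := rec_weights_node rec0 tp; rewrite b_a => -[_ _ /(_ Dp_gt0) [i [lt_i Di] W0p]].
have act_i : active t th mu D0 (rcons p i) by apply: active_child act_p tp lt_i _.
apply: (@cvg_near_eq _ _ _ _
  (fun z => if prefix (rcons p i) l then W_of z (rcons p i) l else 0)).
  have near_sep := near_argmax_unique act_p tp b_a lt_i Di.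
  apply: filterS2 near_mu (filterI near_sep (near_D_gt0 tp Dp_gt0)) => z [_ z_rec z_win] [sep Dz].
  have [+ _] := rec_weights_node z_rec tp; rewrite z_win b_a => -[_ _ /(_ Dz) [i' [lt_i' Di'] Wz]].
  suff <- : i' = i by apply: Wz.
  by apply/eqP; apply: contraT => /(sep (Ordinal lt_i')); rewrite Di' ltxx.
by rewrite W0p //; case: ifP => _; [apply: W_cvg_child | apply: cvg_cst].
Qed.

Lemma W_cvg_min p b cs l : active t th mu D0 p -> subtree t p = Some (Node b cs) ->
  b != win t th mu -> l \in leaves t ->
  (forall i, (i < size cs)%N -> active t th mu D0 (rcons p i) ->
     (fun z => W_of z (rcons p i) l) @ mu_nbhs --> W0 (rcons p i) l) ->
  (fun z => W_of z p l) @ mu_nbhs --> W0 p l.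
Proof.
move=> act_p tp b_a l_leaf W_cvg_child; have Dp_gt0 := active_gt0 rec0 act_p.
have [D0_gt0 _ W0p] := rec_weights_min_pos rec0 tp b_a Dp_gt0.
have near_pos : mu_nbhs (fun z => forall i : 'I_(size cs), 0 < D_of z (rcons p i)).
  by apply: filter_forall_fin => i; apply: near_D_gt0 (subtree_child tp (ltn_ord i)) (D0_gt0 i).
apply: (@cvg_near_eq _ _ _ _
  (fun z => harmonic_mix (D_of z) p (size cs) (W_of z \o rcons p) l)).
  apply: filterS2 near_mu near_pos => z [_ z_rec z_win] z_pos.
  have b_az : b != win t th (mu_of z) by rewrite z_win.
  by have [_ ->] := rec_weights_min_gt0 z_rec tp b_az z_pos.
have S_gt0 := inv_sum_gt0 wf tp D0_gt0.
have Dj_cvg (j : 'I_(size cs)) := D_cvg (subtree_child tp (ltn_ord j)).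
rewrite W0p //; apply: cvg_sum_ord => i; case: ifP => _; last exact: cvg_cst.
apply: cvgM; first apply: cvgM.
- apply: W_cvg_child (ltn_ord i) _.
  by apply: active_child act_p tp (ltn_ord i) _; rewrite (negbTE b_a).
- by apply: cvgV; [rewrite gt_eqF | apply: Dj_cvg].
apply: cvgV; first by rewrite gt_eqF.
by apply: cvg_sum_ord => j; apply: cvgV; [rewrite gt_eqF | apply: Dj_cvg].
Qed.

Lemma W_cvg s p : subtree t p = Some s -> active t th mu D0 p ->
  forall l, l \in leaves t -> (fun z => W_of z p l) @ mu_nbhs --> W0 p l.
Proof.
move: s p; apply: subtree_ind => [p tp _ l|p b cs tp W_cvg_child act_p l l_leaf].
  exact: W_cvg_leaf.
have {}W_cvg_child i : (i < size cs)%N -> active t th mu D0 (rcons p i) ->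
    (fun z => W_of z (rcons p i) l) @ mu_nbhs --> W0 (rcons p i) l.
  by move=> lt_i act_i; apply: W_cvg_child.
case b_a: (b == win t th mu).
  exact: W_cvg_max act_p tp b_a l_leaf W_cvg_child.
exact: W_cvg_min act_p tp (negbT b_a) l_leaf W_cvg_child.
Qed.

Lemma root_W_cvg l : l \in leaves t -> (fun z => W_of z [::] l) @ mu_nbhs --> W0 [::] l.
Proof.
move=> l_leaf; apply: W_cvg (subtree_nil t) _ l l_leaf; apply: active_root.
exact (recD_gt0 wf HE Xth rec0 Xmu (subtree_nil t) (strict_side_root mu_th)).
Qed.

End Continuity.

Unset Implicit Arguments.
Set Strict Implicit.

Theorem lemma6 (R : realType) (t : tree) (Th : set R) (A : R -> R) (th : R)
  (mu : seq nat -> R) :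
  wf_tree t ->
  expfam Th A ->
  meanset Th A th ->
  (forall l, l \in leaves t -> meanset Th A (mu l)) ->
  gval t mu != th ->
  (exists w, is_maximizer t (meanset Th A) (kl Th A) th mu w) ->
  (forall w1 w2, is_maximizer t (meanset Th A) (kl Th A) th mu w1 ->
                 is_maximizer t (meanset Th A) (kl Th A) th mu w2 ->
                 forall l, l \in leaves t -> w1 l = w2 l) ->
  forall eps : R, 0 < eps ->
  exists2 xi : R, 0 < xi &
    forall mu' : seq nat -> R,
      (forall l, l \in leaves t ->
         meanset Th A (mu' l) /\ mu l - xi <= mu' l <= mu l + xi) ->
      forall (D D' : seq nat -> R) (W W' : seq nat -> seq nat -> R),
        rec_weights t (kl Th A) th mu D W ->
        rec_weights t (kl Th A) th mu' D' W' ->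
        forall l, l \in leaves t -> `|W' [::] l - W [::] l| < eps.
Proof.
move=> wf HE Xth Xmu mu_th _ max_unique eps eps_gt0.
have [[D0 [W0 rec0]]|no_rec] := pselect (exists D0 W0, rec_weights t (kl Th A) th mu D0 W0).
  have eps2_gt0 : 0 < eps / 2 by rewrite divr_gt0.
  have [xi xi_gt0 W_near] : mu_nbhs t Th A th mu (fun z => forall l, l \in leaves t ->
      `|W0 [::] l - W_of z [::] l| < eps / 2).
    apply: filter_forall_seq => l l_leaf.
    by move/cvgrPdist_lt: (root_W_cvg wf HE Xth Xmu mu_th rec0 max_unique l_leaf); apply.
  exists xi => // mu' mu'_near D D' W W' rec rec' l l_leaf.
  have mu_near : mean_close t Th A mu xi mu.
    by move=> l' /Xmu Xl; split=> //; apply/andP; split; lra.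
  have := W_near (Weighting mu' D' W') mu'_near rec' l l_leaf.
  have := W_near (Weighting mu D W) mu_near rec l l_leaf.
  by rewrite /= !ltr_norml => /andP[? ?] /andP[? ?]; apply/andP; split; lra.
by exists 1 => // mu' _ D D' W W' rec; case: no_rec; exists D, W.
Qed.
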